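(* For every integer $n\ge 1$, the number of Dumont permutations of the second kind of length $2n$ that avoid the pattern $231$ is $2^{n-1}$, i.e. $|\mathfrak D^2_{2n}(231)|=2^{n-1}$.
   Context: A Dumont permutation of the second kind of length $2n$ is a permutation $\pi\in\mathfrak S_{2n}$ such that for every $i=1,\dots,n$ one has $\pi(2i)<2i$ and $\pi(2i-1)\ge 2i-1$ (entries at even positions are deficiencies, entries at odd positions are fixed points or excedances). $\mathfrak D^2_{2n}$ denotes the set of these. A permutation $\sigma$ contains a pattern $\tau\in\mathfrak S_k$ if some subsequence $(\sigma(i_1),\dots,\sigma(i_k))$, $i_1<\dots<i_k$, is order-isomorphic to $\tau$; otherwise $\sigma$ avoids $\tau$. $\mathfrak D^2_{2n}(T)$ denotes the set of permutations in $\mathfrak D^2_{2n}$ avoiding every pattern in $T$. *)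

From mathcomp Require Import all_boot all_fingroup.
Set Implicit Arguments. Unset Strict Implicit. Unset Printing Implicit Defensive.

(* Index i : 'I_m (0-based) stands for position i+1 and value s i stands
   for value (s i)+1.  So position i+1 is even iff i is odd, and
   pi(i+1) < i+1 iff s i < i. *)

Definition contains_pattern (m k : nat) (sigma : 'S_m) (tau : 'S_k) : bool :=
  [exists f : {ffun 'I_k -> 'I_m},
    [forall a : 'I_k, forall b : 'I_k, (a < b) ==> (f a < f b)] &&
    [forall a : 'I_k, forall b : 'I_k,
       (sigma (f a) < sigma (f b)) == (tau a < tau b)]].

Definition avoids_pattern (m k : nat) (sigma : 'S_m) (tau : 'S_k) : bool :=
  ~~ contains_pattern sigma tau.

(* Dumont permutation of the second kind of length m (= 2n):
   even positions are deficiencies, odd positions are fixed points or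
   excedances. *)
Definition dumont2 (m : nat) (sigma : 'S_m) : bool :=
  [forall i : 'I_m, if odd i then sigma i < i else i <= sigma i].

(* The pattern 231 in 'S_3 (0-based: 1,2,0). *)
Definition pat231_fun (i : 'I_3) : 'I_3 := inord ((i + 1) %% 3).

Lemma pat231_inj : injective pat231_fun.
Proof.
move=> x y; rewrite /pat231_fun => /(congr1 val) /=.
rewrite !inordK ?ltn_mod // => h; apply: val_inj.
by case: x y h => [[|[|[|?]]] ?] [[|[|[|?]]] ?].
Qed.

Definition pat231 : 'S_3 := perm pat231_inj.

Definition D2_avoid231 (n : nat) : {set 'S_(2 * n)} :=
  [set sigma : 'S_(2 * n) | dumont2 sigma & avoids_pattern sigma pat231].

From mathcomp Require Import all_boot all_fingroup zify.
Set Implicit Arguments. Unset Strict Implicit. Unset Printing Implicit Defensive.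

(* Let s be a
   Dumont permutation of the second kind of length m + 2 (m even) avoiding
   231, ending with a, b.  The Dumont conditions at the last two positions
   give m <= a and b <= m, and a value strictly between b and a would occur
   before them and form a 231 with them; hence (a, b) is (m + 1, m) or
   (m, m - 1).  In the first case the prefix is such a permutation of length
   m; in the second it becomes one after exchanging the values m - 1 and
   m + 1, which does not change the relative order of its entries.  Both
   constructions can be reversed, so the number of such permutations doubles
   at each step, starting from the single permutation 21. *)

Lemma cat_injl (T : Type) (u : seq T) : injective (cat^~ u).
Proof.
elim/last_ind: u => [|u x IHu] s1 s2 /=; first by rewrite !cats0.
by rewrite -!rcons_cat => /(@rcons_injl _ x); apply: IHu.
Qed.

Lemma card_eq_size_image (T : finType) (U : eqType) (f : T -> U) (A : {pred T})
    (L : seq U) :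
  injective f -> uniq L -> (forall u, u \in L <-> exists2 x, x \in A & f x = u) ->
  #|A| = size L.
Proof.
move=> f_inj L_uniq memL; rewrite cardE -(size_map f); apply: perm_size.
apply: uniq_perm => // [|u]; first by rewrite map_inj_uniq ?enum_uniq.
apply/mapP/idP => [[x] | /memL [x Ax <-]]; last by exists x; rewrite ?mem_enum.
by rewrite mem_enum => Ax ->; apply/memL; exists x.
Qed.

Lemma perm_iota_lt (s : seq nat) m : perm_eq s (iota 0 m) -> {in s, forall x, x < m}.
Proof. by move=> s_perm x; rewrite (perm_mem s_perm) mem_iota. Qed.

Lemma perm_iota_cat2 (t : seq nat) m :
  perm_eq (t ++ [:: m; m.+1]) (iota 0 m.+2) = perm_eq t (iota 0 m).
Proof. by rewrite -addn2 iotaD add0n perm_cat2r. Qed.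

Definition tswap (a b x : nat) : nat :=
  if x == a then b else if x == b then a else x.

Lemma tswapK a b : involutive (tswap a b).
Proof. by move=> x; rewrite /tswap; do ! case: eqP; lia. Qed.

Lemma perm_map_tswap_iota a b n :
  a < n -> b < n -> perm_eq (map (tswap a b) (iota 0 n)) (iota 0 n).
Proof.
have tswap_inj := inv_inj (tswapK a b).
move=> an bn; apply: uniq_perm; rewrite ?(map_inj_uniq tswap_inj) ?iota_uniq //.
move=> x; rewrite -{1}(tswapK a b x) (mem_map tswap_inj) !mem_iota /tswap.
by apply/idP/idP; do ! case: eqP; lia.
Qed.

Definition dumont2_seq (s : seq nat) : Prop :=
  forall i, i < size s -> if odd i then nth 0 s i < i else i <= nth 0 s i.

Definition avoids231_seq (s : seq nat) : Prop :=
  forall i j k, i < j -> j < k -> k < size s -> ~ (nth 0 s k < nth 0 s i < nth 0 s j).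

Definition dumont231 (m : nat) (s : seq nat) : Prop :=
  [/\ perm_eq s (iota 0 m), dumont2_seq s & avoids231_seq s].

Variant nth_cat2_spec (t : seq nat) a b i : nat -> Prop :=
  | NthCat2Prefix of i < size t : nth_cat2_spec t a b i (nth 0 t i)
  | NthCat2First of i = size t : nth_cat2_spec t a b i a
  | NthCat2Second of i = (size t).+1 : nth_cat2_spec t a b i b.

Lemma nth_cat2P t a b i :
  i < (size t).+2 -> nth_cat2_spec t a b i (nth 0 (t ++ [:: a; b]) i).
Proof.
move=> it2; rewrite nth_cat; case: ltnP => [it|ti]; first by constructor.
have [->|->] : i = size t \/ i = (size t).+1 by lia.
  by rewrite subnn; apply: NthCat2First.
by rewrite subSnn; apply: NthCat2Second.
Qed.

Lemma dumont2_seq_cat2 t a b : ~~ odd (size t) ->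
  dumont2_seq (t ++ [:: a; b]) <-> [/\ dumont2_seq t, size t <= a & b <= size t].
Proof.
move=> t_even; rewrite /dumont2_seq size_cat addn2.
split=> [Hd | [Ht ta bt] i i_lt].
  split=> [i it||].
  - by move: (Hd i (leqW (leqW it))); case: nth_cat2P; lia.
  - by move: (Hd (size t) (leqW (ltnSn _))); rewrite (negbTE t_even); case: nth_cat2P; lia.
  - by move: (Hd (size t).+1 (ltnSn _)) => /=; rewrite t_even; case: nth_cat2P; lia.
case: (nth_cat2P a b i_lt) => [|->|->]; first exact: Ht.
  by rewrite (negbTE t_even).
by rewrite /= t_even.
Qed.

Lemma avoids231_seq_catl s t : avoids231_seq (s ++ t) -> avoids231_seq s.
Proof.
move=> Ha i j k ij jk ks; have := Ha i j k ij jk; rewrite size_cat !nth_cat ks.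
by rewrite (ltn_trans jk ks) (ltn_trans ij (ltn_trans jk ks)); apply; lia.
Qed.

Lemma avoids231_seq_map f (s : seq nat) :
  {in s &, {mono f : x y / x < y}} -> avoids231_seq (map f s) <-> avoids231_seq s.
Proof.
move=> f_mono; rewrite /avoids231_seq size_map.
have lt_nth_map i j : i < size s -> j < size s ->
    (nth 0 (map f s) i < nth 0 (map f s) j) = (nth 0 s i < nth 0 s j).
  by move=> ? ?; rewrite !(nth_map 0) // f_mono ?mem_nth.
by split=> Ha i j k ij jk ks; have := Ha i j k ij jk ks; rewrite !lt_nth_map //; lia.
Qed.

Lemma avoids231_seq_cat2 (t : seq nat) a b : b < a ->
    {in t &, forall x y, x < y -> x < b} -> {in t, forall x, x < b \/ a < x} ->
  avoids231_seq t -> avoids231_seq (t ++ [:: a; b]).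
Proof.
move=> ba low gap Ha i j k ij jk; rewrite size_cat addn2 => ks.
have low_nth p q : p < size t -> q < size t -> nth 0 t p < nth 0 t q -> nth 0 t p < b.
  by move=> ? ?; apply: low; apply: mem_nth.
have gap_nth p : p < size t -> nth 0 t p < b \/ a < nth 0 t p.
  by move=> ?; apply: gap; apply: mem_nth.
have [il jl] : i < (size t).+2 /\ j < (size t).+2 by lia.
case: (nth_cat2P a b ks) => kt; case: (nth_cat2P a b jl) => jt;
  case: (nth_cat2P a b il) => it; try lia.
- exact: Ha.
- by have := low_nth i j it jt; lia.
- by have := low_nth i j it jt; lia.
- by have := gap_nth i it; lia.
Qed.

Lemma avoids231_seq_cat2_gap (t : seq nat) a b x :
  avoids231_seq (t ++ [:: a; b]) -> b < x < a -> x \notin t.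
Proof.
move=> Ha bxa; apply/negP => /(nthP 0) [i it ti].
apply: (Ha i (size t) (size t).+1); rewrite ?size_cat ?addn2 //.
by rewrite !nth_cat it ltnn subnn [_.+1 < _]ltnNge leqnSn subSnn /= ti.
Qed.

Section TopSwap.

Variable m : nat.

Local Notation sw := (tswap m.-1 m.+1).

Lemma tswap_mono (s : seq nat) :
  {in s, forall x, x < m} -> {in s &, {mono sw : x y / x < y}}.
Proof.
by move=> s_lt x y /s_lt xm /s_lt ym; rewrite /tswap; apply/idP/idP; do ! case: eqP; lia.
Qed.

Lemma dumont2_seq_map_tswap (t : seq nat) : {in t, forall x, x < m} -> size t <= m ->
  dumont2_seq (map sw t) <-> dumont2_seq t.
Proof.
move=> t_lt t_size; rewrite /dumont2_seq size_map.
split=> Hd i it; have := Hd i it; have := t_lt _ (mem_nth 0 it);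
  rewrite (nth_map 0) // /tswap; case: (odd i); do ! case: eqP; lia.
Qed.

Lemma perm_iota_catA (t : seq nat) :
  perm_eq (t ++ [:: m.+1; m]) (iota 0 m.+2) = perm_eq t (iota 0 m).
Proof.
suff /permPl -> : perm_eq (t ++ [:: m.+1; m]) (t ++ [:: m; m.+1]) by apply: perm_iota_cat2.
by rewrite perm_cat2l (perm_catC [:: m.+1] [:: m]).
Qed.

Lemma perm_iota_catB (t : seq nat) : 0 < m ->
  perm_eq (map sw t ++ [:: m; m.-1]) (iota 0 m.+2) = perm_eq t (iota 0 m).
Proof.
move=> m_gt0; have sw_inj := inv_inj (tswapK m.-1 m.+1).
have -> : map sw t ++ [:: m; m.-1] = map sw (t ++ [:: m; m.+1]).
  by rewrite map_cat; congr (_ ++ [:: _; _]); rewrite /tswap; do ! case: eqP; lia.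
have /permPr <- :=
  perm_map_tswap_iota (leq_ltn_trans (leq_pred m) (leqW (ltnSn m))) (ltnSn m.+1).
rewrite -(perm_iota_cat2 t).
by apply/idP/idP => [/(perm_map_inj sw_inj) | /(perm_map sw)].
Qed.

Definition dumont231_ext (L : seq (seq nat)) : seq (seq nat) :=
  [seq t ++ [:: m.+1; m] | t <- L] ++ [seq map sw t ++ [:: m; m.-1] | t <- L].

Lemma dumont231_ext_uniq L : 0 < m -> uniq L -> uniq (dumont231_ext L).
Proof.
have sw_inj := inv_inj (tswapK m.-1 m.+1).
move=> m_gt0 L_uniq; rewrite cat_uniq !map_inj_uniq //; first last.
- exact: cat_injl.
- by move=> t1 t2 /cat_injl /(inj_map sw_inj).
rewrite L_uniq andbT; apply/hasPn => _ /mapP [t1 _ ->]; apply/mapP => -[t2 _].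
by move/(congr1 (last 0)); rewrite !last_cat /=; lia.
Qed.

Lemma size_dumont231_ext L : size (dumont231_ext L) = (size L).*2.
Proof. by rewrite size_cat !size_map addnn. Qed.

Hypothesis m_even : ~~ odd m.

Lemma dumont231_catA (t : seq nat) :
  dumont231 m.+2 (t ++ [:: m.+1; m]) <-> dumont231 m t.
Proof.
rewrite /dumont231 perm_iota_catA.
split=> -[t_perm Hd Ha]; have t_size := etrans (perm_size t_perm) (size_iota 0 m).
  move/dumont2_seq_cat2: Hd; rewrite t_size => /(_ m_even) [Hd _ _].
  by split=> //; apply: avoids231_seq_catl Ha.
split=> //; first by apply/dumont2_seq_cat2; rewrite t_size.
have t_lt := perm_iota_lt t_perm.
by apply: avoids231_seq_cat2 => // [x y /t_lt + _ _ | x /t_lt]; lia.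
Qed.

Lemma dumont231_catB (t : seq nat) : 0 < m ->
  dumont231 m.+2 (map sw t ++ [:: m; m.-1]) <-> dumont231 m t.
Proof.
move=> m_gt0; rewrite /dumont231 perm_iota_catB //.
split=> -[t_perm Hd Ha]; have t_size := etrans (perm_size t_perm) (size_iota 0 m);
  have t_lt := perm_iota_lt t_perm.
  move/dumont2_seq_cat2: Hd; rewrite size_map t_size => /(_ m_even) [Hd _ _].
  split=> //; first by apply/(dumont2_seq_map_tswap t_lt); rewrite ?t_size.
  by apply/(avoids231_seq_map (tswap_mono t_lt)); apply: avoids231_seq_catl Ha.
have sw_t : {in map sw t, forall x, x < m.-1 \/ x = m.+1}.
  by move=> _ /mapP [x /t_lt xm ->]; rewrite /tswap; do ! case: eqP; lia.
split=> //.
  apply/dumont2_seq_cat2; rewrite size_map t_size //.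
  by split; [apply/(dumont2_seq_map_tswap t_lt); rewrite ?t_size | | apply: leq_pred].
apply: avoids231_seq_cat2 => [|x y /sw_t + /sw_t|x /sw_t|]; try lia.
exact/(avoids231_seq_map (tswap_mono t_lt)).
Qed.

Lemma dumont231_last2 s : dumont231 m.+2 s ->
  exists t, s = t ++ [:: m.+1; m] \/ 0 < m /\ s = t ++ [:: m; m.-1].
Proof.
move=> [s_perm Hd Ha]; have s_size := etrans (perm_size s_perm) (size_iota 0 m.+2).
have [t [a [b def_s]]] : exists t a b, s = t ++ [:: a; b].
  case/lastP: s s_size {s_perm Hd Ha} => // s' b; case/lastP: s' => // t a _.
  by exists t, a, b; rewrite -!cats1 -catA.
subst s; exists t; move: s_size; rewrite size_cat addn2 => -[t_size].
move/dumont2_seq_cat2: Hd; rewrite t_size => /(_ m_even) [_ ma bm].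
have a_lt : a < m.+2 by apply: (perm_iota_lt s_perm); rewrite mem_cat !inE eqxx orbT.
have ab : a != b.
  by move: (perm_uniq s_perm); rewrite iota_uniq cat_uniq => /and3P [_ _ /=]; rewrite inE andbT.
have [b1a|ab1] := ltnP b.+1 a.
  have b1_t : b.+1 \notin t by apply: (avoids231_seq_cat2_gap Ha); rewrite leqnn.
  have : b.+1 \in t ++ [:: a; b] by rewrite (perm_mem s_perm) mem_iota; lia.
  by rewrite mem_cat (negbTE b1_t) !inE; lia.
have [[-> ->]|[m_gt0 [-> ->]]] : a = m.+1 /\ b = m \/ 0 < m /\ a = m /\ b = m.-1 by lia.
  by left.
by right.
Qed.

Lemma dumont231S s :
  dumont231 m.+2 s <->
  exists2 t, dumont231 m t &
    s = t ++ [:: m.+1; m] \/ 0 < m /\ s = map sw t ++ [:: m; m.-1].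
Proof.
split=> [/[dup] Hs /dumont231_last2 [t [def_s | [m_gt0 def_s]]] |].
- by exists t; [apply/dumont231_catA; rewrite -def_s | left].
- have def_t : t = map sw (map sw t) by rewrite mapK //; apply: tswapK.
  exists (map sw t); last by right; rewrite -def_t.
  by apply/(dumont231_catB _ m_gt0); rewrite -def_t -def_s.
- by case=> t Ht [-> | [m_gt0 ->]]; [apply/dumont231_catA | apply/dumont231_catB].
Qed.

Lemma mem_dumont231_ext L s : 0 < m -> (forall t, t \in L <-> dumont231 m t) ->
  s \in dumont231_ext L <-> dumont231 m.+2 s.
Proof.
move=> m_gt0 memL; rewrite dumont231S mem_cat.
split=> [/orP [] /mapP [t /memL Ht ->] | [t /memL Ht [-> | [_ ->]]]].
- by exists t; [|left].
- by exists t; [|right].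
- by apply/orP; left; apply/mapP; exists t.
- by apply/orP; right; apply/mapP; exists t.
Qed.

End TopSwap.

Fixpoint dumont231_enum n : seq (seq nat) :=
  if n is n'.+1 then dumont231_ext (2 * n) (dumont231_enum n') else [:: [:: 1; 0]].

Lemma mem_dumont231_enum n s : s \in dumont231_enum n <-> dumont231 (2 * n.+1) s.
Proof.
elim: n s => [|n IHn] s.
  rewrite inE; split=> [/eqP -> | /(@dumont231S 0 isT) [t [/perm_nilP -> _ _] [-> | []]]] //.
  by apply/(@dumont231_catA 0 isT [::]).
rewrite [2 * n.+2]mulnS add2n; apply: mem_dumont231_ext => //.
by rewrite mul2n odd_double.
Qed.

Lemma dumont231_enum_uniq n : uniq (dumont231_enum n).
Proof. by elim: n => //= n IHn; apply: dumont231_ext_uniq. Qed.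

Lemma size_dumont231_enum n : size (dumont231_enum n) = 2 ^ n.
Proof. by elim: n => //= n IHn; rewrite size_dumont231_ext IHn expnS mul2n. Qed.

Definition seq_of_perm m (s : 'S_m) : seq nat := [seq val (s i) | i <- enum 'I_m].

Lemma size_seq_of_perm m (s : 'S_m) : size (seq_of_perm s) = m.
Proof. by rewrite size_map size_enum_ord. Qed.

Lemma nth_seq_of_perm m (s : 'S_m) (i : 'I_m) : nth 0 (seq_of_perm s) i = s i.
Proof. by rewrite (nth_map i) ?size_enum_ord // nth_ord_enum. Qed.

Lemma seq_of_perm_inj m : injective (@seq_of_perm m).
Proof.
by move=> s1 s2 E; apply/permP => i; apply: val_inj; rewrite /= -!nth_seq_of_perm E.
Qed.

Lemma perm_iota_seq_of_perm m (s : 'S_m) : perm_eq (seq_of_perm s) (iota 0 m).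
Proof.
rewrite -val_enum_ord /seq_of_perm (map_comp val s); apply: perm_map.
apply: uniq_perm; rewrite ?(map_inj_uniq (@perm_inj _ s)) ?enum_uniq // => i.
by rewrite mem_enum -[i](permKV s) map_f ?mem_enum.
Qed.

Lemma seq_of_permP m u : perm_eq u (iota 0 m) -> exists s : 'S_m, seq_of_perm s = u.
Proof.
move=> u_perm; have u_lt := perm_iota_lt u_perm.
have u_size : size u = m by rewrite (perm_size u_perm) size_iota.
have u_uniq : uniq u by rewrite (perm_uniq u_perm) iota_uniq.
pose f (i : 'I_m) : 'I_m := insubd i (nth 0 u i).
have val_f i : val (f i) = nth 0 u i by rewrite val_insubd u_lt // mem_nth ?u_size.
have f_inj : injective f.
  move=> i j /(congr1 val); rewrite !val_f => /eqP.
  by rewrite nth_uniq ?u_size // => /eqP /val_inj.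
exists (perm f_inj); apply: (@eq_from_nth _ 0); rewrite size_seq_of_perm // => i im.
by rewrite -[i]/(val (Ordinal im)) nth_seq_of_perm permE val_f.
Qed.

Lemma dumont2_seq_of_perm m (s : 'S_m) : dumont2 s <-> dumont2_seq (seq_of_perm s).
Proof.
rewrite /dumont2_seq size_seq_of_perm; split=> [/forallP Hd i im | Hd].
  by have := Hd (Ordinal im); rewrite -nth_seq_of_perm.
by apply/forallP => i; rewrite -nth_seq_of_perm; apply: Hd.
Qed.

Lemma pat231E (a : 'I_3) : pat231 a = (a + 1) %% 3 :> nat.
Proof. by rewrite permE /= inordK ?ltn_mod. Qed.

Lemma contains231P m (s : 'S_m) :
  reflect (exists i j k : 'I_m, [/\ i < j, j < k & s k < s i < s j])
          (contains_pattern s pat231).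
Proof.
apply: (iffP existsP) => [[f /andP [/forallP f_incr /forallP f_ord]] | [i [j [k [ij jk sk]]]]].
  pose a0 : 'I_3 := @Ordinal 3 0 isT; pose a1 : 'I_3 := @Ordinal 3 1 isT.
  pose a2 : 'I_3 := @Ordinal 3 2 isT.
  move: (f_incr a0) (f_incr a1) (f_ord a2) (f_ord a0).
  move=> /forallP/(_ a1) f01 /forallP/(_ a2) f12 /forallP/(_ a0) s20 /forallP/(_ a1) s01.
  rewrite !pat231E /= in f01 f12 s20 s01.
  by exists (f a0), (f a1), (f a2); rewrite f01 f12 (eqP s20) (eqP s01).
exists [ffun a : 'I_3 => if val a == 0 then i else if val a == 1 then j else k].
apply/andP; split; apply/forallP => a; apply/forallP => b; rewrite !ffunE ?pat231E.
all: case: a b => [[|[|[|a]]] Ha] [[|[|[|b]]] Hb] //=; rewrite ?eqb_id ?eqbF_neg; lia.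
Qed.

Lemma avoids231_seq_of_perm m (s : 'S_m) :
  avoids_pattern s pat231 <-> avoids231_seq (seq_of_perm s).
Proof.
rewrite /avoids_pattern /avoids231_seq size_seq_of_perm.
split=> [/(elimN (contains231P s)) s_avoids i j k ij jk km | s_avoids].
  have [im jm] : i < m /\ j < m by lia.
  rewrite -[i]/(val (Ordinal im)) -[j]/(val (Ordinal jm)) -[k]/(val (Ordinal km)).
  rewrite !nth_seq_of_perm => sk; apply: s_avoids.
  by exists (Ordinal im), (Ordinal jm), (Ordinal km).
apply/(introN (contains231P s)) => -[i [j [k [ij jk]]]].
by rewrite -!nth_seq_of_perm; apply: s_avoids.
Qed.

Lemma mem_D2_avoid231 n (s : 'S_(2 * n)) :
  s \in D2_avoid231 n <-> dumont231 (2 * n) (seq_of_perm s).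
Proof.
rewrite inE; split=> [/andP [/dumont2_seq_of_perm Hd /avoids231_seq_of_perm Ha] | [_ Hd Ha]].
  by split=> //; apply: perm_iota_seq_of_perm.
by apply/andP; split; [apply/dumont2_seq_of_perm | apply/avoids231_seq_of_perm].
Qed.

Theorem theorem2p2 (n : nat) : 1 <= n -> #|D2_avoid231 n| = 2 ^ (n - 1).
Proof.
case: n => [//|n] _; rewrite subn1 -(size_dumont231_enum n).
apply: card_eq_size_image (@seq_of_perm_inj _) (dumont231_enum_uniq n) _ => u.
rewrite mem_dumont231_enum; split=> [u_D | [s /mem_D2_avoid231 ? <-] //].
have [s def_u] : exists s : 'S_(2 * n.+1), seq_of_perm s = u.
  by case: u_D => u_perm _ _; apply: seq_of_permP.
by exists s => //; apply/mem_D2_avoid231; rewrite def_u.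
Qed.
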